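(* Let $R$ be a local ring and $s\in R$ a central element. The following are equivalent: (1) every $A\in M_2(R;s)$ with $A\notin U\big(M_2(R;s)\big)$ and $I_2-A\notin U\big(M_2(R;s)\big)$ is strongly nil clean; (2) every $A\in M_2(R;s)$ with $A\notin U\big(M_2(R;s)\big)$ and $I_2-A\notin U\big(M_2(R;s)\big)$ is strongly $J$-clean, and $J(R)$ is nil.
   Context: All rings are associative with identity. A ring $R$ is local if $R/J(R)$ is a division ring, where $J(R)$ is the Jacobson radical; $U(T)$ is the group of units and $Nil(T)$ the set of nilpotent elements of a ring $T$; $J(R)$ is nil if every element of it is nilpotent. For a ring $R$ and a central element $s\in R$, $M_2(R;s)$ denotes the ring whose elements are the $2\times 2$ arrays $\left[\begin{smallmatrix} a&b\\ c&d\end{smallmatrix}\right]$ with $a,b,c,d\in R$, with componentwise addition and multiplication $\left[\begin{smallmatrix} a&b\\ c&d\end{smallmatrix}\right]\left[\begin{smallmatrix} a'&b'\\ c'&d'\end{smallmatrix}\right]=\left[\begin{smallmatrix} aa'+s^2bc'&ab'+bd'\\ ca'+dc'&s^2cb'+dd'\end{smallmatrix}\right]$, with identity $I_2$. An element $a$ of a ring $T$ is strongly nil clean if there is an idempotent $e\in T$ with $ae=ea$ and $a-e\in Nil(T)$; it is strongly $J$-clean if there is an idempotent $e\in T$ with $ae=ea$ and $a-e\in J(T)$. *)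

From HB Require Import structures.
From mathcomp Require Import all_boot all_order all_algebra.
Set Implicit Arguments. Unset Strict Implicit. Unset Printing Implicit Defensive.
Import GRing.Theory.
Local Open Scope ring_scope.

Section Base.
Variable R : unitRingType.

Definition inJ (x : R) : Prop := forall y : R, (1 - y * x) \is a GRing.unit.

Definition nilpotent (x : R) : Prop := exists n : nat, x ^+ n = 0.

Definition J_nil : Prop := forall x : R, inJ x -> nilpotent x.

(* R/J(R) is a division ring: it is nonzero (1 notin J) and every class
   x + J(R) with x notin J(R) has a two-sided inverse modulo J(R). *)
Definition local_ring : Prop :=
  ~ inJ 1 /\
  forall x : R, ~ inJ x -> exists y : R, inJ (x * y - 1) /\ inJ (y * x - 1).

Definition central (s : R) : Prop := forall x : R, s * x = x * s.
End Base.

Record M2s (R : Type) := mkM2 { m11 : R; m12 : R; m21 : R; m22 : R }.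

Section M2.
Variables (R : unitRingType) (s : R).

Definition M2zero : M2s R := mkM2 0 0 0 0.
Definition M2one : M2s R := mkM2 1 0 0 1.
Definition M2add (A B : M2s R) : M2s R :=
  mkM2 (m11 A + m11 B) (m12 A + m12 B) (m21 A + m21 B) (m22 A + m22 B).
Definition M2opp (A : M2s R) : M2s R :=
  mkM2 (- m11 A) (- m12 A) (- m21 A) (- m22 A).
Definition M2sub (A B : M2s R) : M2s R := M2add A (M2opp B).

Definition M2mul (A B : M2s R) : M2s R :=
  mkM2 (m11 A * m11 B + s ^+ 2 * m12 A * m21 B)
       (m11 A * m12 B + m12 A * m22 B)
       (m21 A * m11 B + m22 A * m21 B)
       (s ^+ 2 * m21 A * m12 B + m22 A * m22 B).

Definition M2pow (A : M2s R) (n : nat) : M2s R := iter n (M2mul A) M2one.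

Definition M2unit (A : M2s R) : Prop :=
  exists B : M2s R, M2mul A B = M2one /\ M2mul B A = M2one.

Definition M2nilpotent (A : M2s R) : Prop := exists n : nat, M2pow A n = M2zero.

Definition M2idempotent (E : M2s R) : Prop := M2mul E E = E.

Definition M2inJ (A : M2s R) : Prop :=
  forall B : M2s R, M2unit (M2sub M2one (M2mul B A)).

Definition strongly_nil_clean (A : M2s R) : Prop :=
  exists E : M2s R, M2idempotent E /\ M2mul A E = M2mul E A /\
                    M2nilpotent (M2sub A E).

Definition strongly_J_clean (A : M2s R) : Prop :=
  exists E : M2s R, M2idempotent E /\ M2mul A E = M2mul E A /\
                    M2inJ (M2sub A E).
End M2.

(* Over a local ring R, an idempotent E of M_2(R;s) other than 0 and 1 factors
   as E = u v with v u = diag(1,0) or diag(0,1) (swapping the diagonal if the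
   (1,1) entry is not a unit).  Hence every X in the corner E M_2(R;s) E is
   u Y v with Y = v X u = diag(a,d), so X is nilpotent iff a and d are, and X
   lies in the Jacobson radical iff a and d lie in J(R), which is the set of
   nonunits of R.  An element W commuting with E is the sum of E W and
   (1 - E) W, one in each of the two corners, so for such W nilpotence implies
   W in J(M_2(R;s)), and conversely when J(R) is nil.  In a clean decomposition
   A = E + W with A and 1 - A nonunits the idempotent E is nontrivial, which
   gives the equivalence of the two cleanness conditions.  Finally J(R) is nil:
   for x in J(R) the matrix diag(x,1) commutes only with diagonal idempotents,
   and a nil clean decomposition of it forces x to be nilpotent. *)

From HB Require Import structures.
From mathcomp Require Import all_boot all_order all_algebra.
From Stdlib Require Import Classical.
Set Implicit Arguments. Unset Strict Implicit. Unset Printing Implicit Defensive.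
Import GRing.Theory.
Local Open Scope ring_scope.

Section Jacobson.
Variable V : pzRingType.
Implicit Types x y u v E W X Y : V.

Definition invertible x := exists y, x * y = 1 /\ y * x = 1.
Definition in_jacobson x := forall y, invertible (1 - y * x).

Lemma invertibleM x y : invertible x -> invertible y -> invertible (x * y).
Proof.
move=> [x' [xx' x'x]] [y' [yy' y'y]]; exists (y' * x'); split.
  by rewrite mulrA -(mulrA x) yy' mulr1 xx'.
by rewrite mulrA -(mulrA y') x'x mulr1 y'y.
Qed.

Lemma idem_invertible_eq1 E : E * E = E -> invertible E -> E = 1.
Proof. by move=> EE [y [Ey _]]; rewrite -[E]mulr1 -Ey mulrA EE. Qed.

Lemma invertible_1subC x y : invertible (1 - x * y) -> invertible (1 - y * x).
Proof.
move=> [z [h1 h2]]; exists (1 + y * z * x); split.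
  have e : y * z * x - y * x * (y * z * x) = y * x.
    have -> : y * x * (y * z * x) = y * (x * y) * z * x by rewrite !mulrA.
    by rewrite -mulrBl -mulrBl -{1}(mulr1 y) -mulrBr -(mulrA y (1 - x * y) z) h1 mulr1.
  by rewrite mulrDr mulr1 mulrBl mul1r e subrK.
have e : y * z * x - y * z * x * (y * x) = y * x.
  have -> : y * z * x * (y * x) = y * (z * (x * y)) * x by rewrite !mulrA.
  by rewrite -mulrBl -mulrBr -{1}(mulr1 z) -mulrBr h2 mulr1.
by rewrite mulrDl mul1r mulrBr mulr1 e subrK.
Qed.

Lemma invertible_1sub_nilpotent x n : x ^+ n = 0 -> invertible (1 - x).
Proof.
move=> xn; exists (\sum_(i < n) x ^+ i).
have inv_r : (1 - x) * (\sum_(i < n) x ^+ i) = 1.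
  by rewrite -opprB mulNr -subrX1 xn sub0r opprK.
split=> //; rewrite -[RHS]inv_r; apply/esym/commr_sum => i _; apply: commrX.
by rewrite /GRing.comm mulrBl mulrBr mul1r mulr1.
Qed.

Lemma invertible_1add_nilpotent x n : x ^+ n = 0 -> invertible (1 + x).
Proof.
by move=> xn; rewrite -[x]opprK; apply: (invertible_1sub_nilpotent (n := n)); rewrite exprNn xn mulr0.
Qed.

Lemma in_jacobson_1sub x : in_jacobson x -> invertible (1 - x).
Proof. by move=> /(_ 1); rewrite mul1r. Qed.

Lemma in_jacobson_1add x : in_jacobson x -> invertible (1 + x).
Proof. by move=> /(_ (-1)); rewrite mulN1r opprK. Qed.

Lemma in_jacobson_mull x y : in_jacobson x -> in_jacobson (y * x).
Proof. by move=> Jx z; rewrite mulrA. Qed.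

Lemma in_jacobson_mulr x y : in_jacobson x -> in_jacobson (x * y).
Proof. by move=> Jx z; rewrite mulrA; apply: invertible_1subC; rewrite mulrA. Qed.

Lemma in_jacobson_add x y : in_jacobson x -> in_jacobson y -> in_jacobson (x + y).
Proof.
move=> Jx Jy z; have [w [h1 h2]] := Jx z.
have -> : 1 - z * (x + y) = (1 - z * x) * (1 - w * z * y).
  by rewrite mulrBr mulr1 !mulrA h1 mul1r mulrDr opprD addrA.
by apply: invertibleM; [exists w | apply: Jy].
Qed.

Lemma clean_idem_nontrivial x E : ~ invertible x -> ~ invertible (1 - x) ->
  invertible (1 - (x - E)) -> invertible (1 + (x - E)) -> E <> 0 /\ E <> 1.
Proof.
move=> xN x1N inv_sub inv_add; split=> [E0 | E1].
  by apply: x1N; rewrite E0 subr0 in inv_sub.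
by apply: xN; rewrite E1 addrC subrK in inv_add.
Qed.

Lemma conj_expr u v Y n : Y * (v * u) = Y -> (u * Y * v) ^+ n.+1 = u * Y ^+ n.+1 * v.
Proof.
move=> Yvu; elim: n => [|n IH]; first by rewrite !expr1.
by rewrite exprS IH !mulrA -(mulrA (u * Y) v u) -(mulrA u Y (v * u)) Yvu -(mulrA u Y) -exprS.
Qed.

Lemma idem_expr E n : E * E = E -> E ^+ n.+1 = E.
Proof. by move=> EE; elim: n => [|n IH]; rewrite ?expr1 // exprS IH EE. Qed.

Lemma idem_subr E : E * E = E -> (1 - E) * (1 - E) = 1 - E.
Proof. by move=> EE; rewrite mulrBl !mulrBr !mul1r !mulr1 EE subrr subr0. Qed.

Lemma idem_mul_expr E W n : E * E = E -> E * W = W * E ->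
  (E * W) ^+ n.+1 = E * W ^+ n.+1.
Proof. by move=> EE EW; rewrite exprMn_comm // idem_expr. Qed.

Lemma idem_complement_nontrivial E : E <> 0 -> E <> 1 -> 1 - E <> 0 /\ 1 - E <> 1.
Proof.
move=> E0 E1; split=> /eqP; first by rewrite subr_eq0 => /eqP /esym.
by rewrite subr_eq addrC -subr_eq subrr => /eqP /esym.
Qed.

Lemma commr_1sub E W : E * W = W * E -> (1 - E) * W = W * (1 - E).
Proof. by move=> EW; rewrite mulrBl mulrBr mul1r mulr1 EW. Qed.

Lemma nilpotent_idem_split E W : E * E = E -> E * W = W * E ->
  (exists n, (E * W) ^+ n = 0) -> (exists n, ((1 - E) * W) ^+ n = 0) ->
  exists n, W ^+ n = 0.
Proof.
move=> EE EW [n EWn] [m FWm]; exists (n + m).+1.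
rewrite -[W ^+ _]mul1r -[1](subrK E) mulrDl.
rewrite -(idem_mul_expr _ (idem_subr EE) (commr_1sub EW)) -(idem_mul_expr _ EE EW).
have FWz : ((1 - E) * W) ^+ (m + n.+1) = 0 by rewrite exprD FWm mul0r.
have EWz : (E * W) ^+ (n + m.+1) = 0 by rewrite exprD EWn mul0r.
by rewrite addnS addnC in FWz; rewrite addnS in EWz; rewrite FWz EWz addr0.
Qed.

End Jacobson.

Section UnitRing.
Variable R : unitRingType.
Implicit Types x y d : R.

Lemma invertibleP x : invertible x <-> x \is a GRing.unit.
Proof.
split=> [[y [xy yx]] | /unitrP[y [yx xy]]]; last by exists y.
by apply/unitrP; exists y.
Qed.

Lemma inJP x : inJ x <-> in_jacobson x.
Proof. by split=> Jx y; apply/invertibleP. Qed.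

Lemma unitr_inverses x y z : y * x = 1 -> x * z = 1 -> x \is a GRing.unit.
Proof.
move=> yx xz; have yz : y = z by rewrite -[y]mulr1 -xz mulrA yx mul1r.
by apply/unitrP; exists y; rewrite {2}yz.
Qed.

Lemma inJ_nonunit x : inJ x -> x \isn't a GRing.unit.
Proof.
move=> Jx; apply/negP => xU; have /invertibleP[y [+ _]] := Jx x^-1.
by rewrite mulVr // subrr mul0r => /eqP; rewrite eq_sym oner_eq0.
Qed.

Lemma unitrB_inJ d x : d \is a GRing.unit -> inJ x -> (d - x) \is a GRing.unit.
Proof.
move=> dU Jx; have -> : d - x = d * (1 - d^-1 * x) by rewrite mulrBr mulr1 mulrA divrr // mul1r.
by rewrite unitrMl.
Qed.

Lemma inJ_add x y : inJ x -> inJ y -> inJ (x + y).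
Proof. by move=> /inJP Jx /inJP Jy; apply/inJP/in_jacobson_add. Qed.

Lemma inJ_mull x y : inJ x -> inJ (y * x).
Proof. by move=> /inJP Jx; apply/inJP/in_jacobson_mull. Qed.

Lemma inJ_mulr x y : inJ x -> inJ (x * y).
Proof. by move=> /inJP Jx; apply/inJP/in_jacobson_mulr. Qed.

Lemma nilpotent_nonunit x n : x ^+ n = 0 -> x \isn't a GRing.unit.
Proof. by move=> xn; apply/negP => /(unitrX n); rewrite xn unitr0. Qed.

End UnitRing.

Section LocalRing.
Variables (R : unitRingType) (R_local : local_ring R).
Implicit Types x e : R.

Lemma local_nonunit_inJ x : x \isn't a GRing.unit -> inJ x.
Proof.
move=> /negP xN; apply: NNPP => xNJ; apply: xN.
have [y [Jxy Jyx]] := R_local.2 x xNJ.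
have xyU : x * y \is a GRing.unit.
  by have := Jxy (-1); rewrite mulN1r opprK addrC subrK.
have yxU : y * x \is a GRing.unit.
  by have := Jyx (-1); rewrite mulN1r opprK addrC subrK.
apply: (unitr_inverses (y := (y * x)^-1 * y) (z := y * (x * y)^-1)).
  by rewrite -mulrA mulVr.
by rewrite mulrA mulrV.
Qed.

Lemma local_nilpotent_inJ x n : x ^+ n = 0 -> inJ x.
Proof. by move/nilpotent_nonunit/local_nonunit_inJ. Qed.

Lemma local_idem e : e * e = e -> e = 0 \/ e = 1.
Proof.
move=> ee; have [eU | eN] := boolP (e \is a GRing.unit).
  by right; apply: (mulrI eU); rewrite ee mulr1.
have := local_nonunit_inJ eN 1; rewrite mul1r => e1U.
by left; apply: (mulIr e1U); rewrite mulrBr mulr1 ee subrr mul0r.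
Qed.

End LocalRing.

Section M2Ring.
Variables (R : unitRingType) (s : R).

(* The centrality proof is a parameter only so that the ring structure, whose
   associativity needs it, can be attached to this copy of M2s R. *)
Definition M2ring (s_central : central s) : Type := M2s R.

Variable s_central : central s.
Local Notation T := (M2ring s_central).

Definition M2tuple (A : T) : R * R * R * R := (m11 A, m12 A, m21 A, m22 A).
Definition tuple_M2 (x : R * R * R * R) : T := let: (a, b, c, d) := x in mkM2 a b c d.
Lemma M2tupleK : cancel M2tuple tuple_M2. Proof. by case. Qed.
HB.instance Definition _ := Equality.copy T (can_type M2tupleK).
HB.instance Definition _ := Choice.copy T (can_type M2tupleK).

Lemma s2_central x : x * s ^+ 2 = s ^+ 2 * x.
Proof. exact/commrX/commr_sym/s_central. Qed.

Lemma M2mulA : associative (M2mul s : T -> T -> T).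
Proof.
case=> a b c d [a' b' c' d'] [a'' b'' c'' d'']; rewrite /M2mul /=.
congr mkM2; rewrite !(mulrDl, mulrDr, mulrA, s2_central) -!addrA; congr (_ + _);
  by rewrite addrC -!addrA; congr (_ + _); rewrite addrC.
Qed.

Lemma M2addA : associative (@M2add R : T -> T -> T).
Proof. by case=> a b c d [a' b' c' d'] [a'' b'' c'' d'']; rewrite /M2add /= !addrA. Qed.

Lemma M2addC : commutative (@M2add R : T -> T -> T).
Proof. by case=> a b c d [a' b' c' d']; rewrite /M2add /= (addrC a) (addrC b) (addrC c) (addrC d). Qed.

Lemma M2add0 : left_id (M2zero R : T) (@M2add R).
Proof. by case=> a b c d; rewrite /M2add /= !add0r. Qed.

Lemma M2addN : left_inverse (M2zero R : T) (@M2opp R) (@M2add R).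
Proof. by case=> a b c d; rewrite /M2add /= !addNr. Qed.

Lemma M2mul1 : left_id (M2one R : T) (M2mul s).
Proof. by case=> a b c d; rewrite /M2mul /= !(mul1r, mul0r, mulr0, addr0, add0r). Qed.

Lemma M2mulr1 : right_id (M2one R : T) (M2mul s).
Proof. by case=> a b c d; rewrite /M2mul /= !(mulr1, mul0r, mulr0, addr0, add0r). Qed.

Lemma M2mulDl : left_distributive (M2mul s : T -> T -> T) (@M2add R).
Proof.
case=> a b c d [a' b' c' d'] [a'' b'' c'' d'']; rewrite /M2mul /M2add /=.
by congr mkM2; rewrite !(mulrDl, mulrDr) -!addrA; congr (_ + _); rewrite addrCA.
Qed.

Lemma M2mulDr : right_distributive (M2mul s : T -> T -> T) (@M2add R).
Proof.
case=> a b c d [a' b' c' d'] [a'' b'' c'' d'']; rewrite /M2mul /M2add /=.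
by congr mkM2; rewrite !(mulrDl, mulrDr) -!addrA; congr (_ + _); rewrite addrCA.
Qed.

Lemma M2one_neq0 : (M2one R : T) != M2zero R.
Proof. by apply/eqP => -[] /eqP; rewrite oner_eq0. Qed.

HB.instance Definition _ := GRing.isNzRing.Build T M2addA M2addC M2add0 M2addN
  M2mulA M2mul1 M2mulr1 M2mulDl M2mulDr M2one_neq0.

Lemma mulM2E a b c d a' b' c' d' : (mkM2 a b c d : T) * mkM2 a' b' c' d' =
  mkM2 (a * a' + s ^+ 2 * b * c') (a * b' + b * d')
       (c * a' + d * c') (s ^+ 2 * c * b' + d * d').
Proof. by []. Qed.

Lemma addM2E a b c d a' b' c' d' :
  (mkM2 a b c d : T) + mkM2 a' b' c' d' = mkM2 (a + a') (b + b') (c + c') (d + d').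
Proof. by []. Qed.

Lemma oppM2E a b c d : - (mkM2 a b c d : T) = mkM2 (- a) (- b) (- c) (- d).
Proof. by []. Qed.

Lemma oneM2E : (1 : T) = mkM2 1 0 0 1. Proof. by []. Qed.
Lemma zeroM2E : (0 : T) = mkM2 0 0 0 0. Proof. by []. Qed.

Lemma M2powE (A : T) n : M2pow s A n = A ^+ n.
Proof. by elim: n => [|n IH]; rewrite ?expr0 // exprS /= IH. Qed.

Lemma strongly_nil_cleanE (A : T) : strongly_nil_clean s A <->
  exists E : T, [/\ E * E = E, A * E = E * A & exists n, (A - E) ^+ n = 0].
Proof.
split=> [[E [EE [AE [n AEn]]]] | [E [EE AE [n AEn]]]]; exists E.
  by split=> //; exists n; rewrite -M2powE.
by do 2!split=> //; exists n; rewrite M2powE.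
Qed.

Lemma strongly_J_cleanE (A : T) : strongly_J_clean s A <->
  exists E : T, [/\ E * E = E, A * E = E * A & in_jacobson (A - E)].
Proof. by split=> [[E [? [? ?]]] | [E [? ? ?]]]; exists E. Qed.

End M2Ring.

Section M2Local.
Variables (R : unitRingType) (s : R) (s_central : central s).
Local Notation T := (M2ring s_central).
Implicit Types a b c d e f g h x : R.

Local Ltac M2_simpl :=
  rewrite ?oneM2E ?zeroM2E ?mulM2E ?oppM2E ?addM2E /=
          ?(mulr0, mul0r, mulr1, mul1r, addr0, add0r, oppr0, subr0, sub0r, subrr, opprK).

Definition M2diag a d : T := mkM2 a 0 0 d.

Lemma M2diagM a d a' d' : M2diag a d * M2diag a' d' = M2diag (a * a') (d * d').
Proof. by rewrite /M2diag; M2_simpl. Qed.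

Lemma M2diagX a d n : M2diag a d ^+ n = M2diag (a ^+ n) (d ^+ n).
Proof. by elim: n => [|n IH]; rewrite ?expr0 // exprS IH M2diagM -!exprS. Qed.

Lemma M2diag_invertible a d : invertible (M2diag a d) ->
  a \is a GRing.unit /\ d \is a GRing.unit.
Proof.
case=> -[b1 b2 b3 b4] []; rewrite /M2diag; M2_simpl.
case=> ab1 _ _ db4 [b1a _ _ b4d].
by split; [exact: (unitr_inverses b1a ab1) | exact: (unitr_inverses b4d db4)].
Qed.

(* Block LDU factorisation: the Schur complement d - s^2 c a^-1 b is a unit. *)
Lemma invertible_mkM2 a b c d : a \is a GRing.unit -> d \is a GRing.unit ->
  inJ (s ^+ 2 * c * a^-1 * b) -> invertible (mkM2 a b c d : T).
Proof.
move=> aU dU J_schur; pose schur := d - s ^+ 2 * c * a^-1 * b.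
have schurU : schur \is a GRing.unit by apply: unitrB_inJ.
have -> : (mkM2 a b c d : T) =
    (mkM2 1 0 (c * a^-1) 1 : T) * M2diag a schur * (mkM2 1 (a^-1 * b) 0 1 : T).
  rewrite /M2diag; M2_simpl; rewrite mulrA mulrV // mul1r divrK //.
  by congr mkM2; rewrite /schur !mulrA addrC subrK.
apply: invertibleM; first apply: invertibleM.
- by exists (mkM2 1 0 (- (c * a^-1)) 1 : T); split; M2_simpl; rewrite ?addNr ?addrN.
- by exists (M2diag a^-1 schur^-1); rewrite !M2diagM !mulrV ?mulVr.
- by exists (mkM2 1 (- (a^-1 * b)) 0 1 : T); split; M2_simpl; rewrite ?addNr ?addrN.
Qed.

Lemma M2diag_jacobson a d : in_jacobson (M2diag a d) <-> inJ a /\ inJ d.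
Proof.
split=> [J_ad | [Ja Jd] [b1 b2 b3 b4]].
  split=> y; [have := J_ad (M2diag y 0) | have := J_ad (M2diag 0 y)];
    rewrite M2diagM oneM2E /M2diag oppM2E addM2E; M2_simpl;
    by case/M2diag_invertible.
rewrite /M2diag; M2_simpl; apply: invertible_mkM2.
- by have := Ja b1.
- by have := Jd b4.
- by rewrite -!mulNr !mulrA; apply: inJ_mull.
Qed.

Definition M2swap (A : T) : T := mkM2 (m22 A) (m21 A) (m12 A) (m11 A).

Lemma M2swapM (A B : T) : M2swap (A * B) = M2swap A * M2swap B.
Proof. by case: A B => a b c d [a' b' c' d']; rewrite /M2swap; M2_simpl; congr mkM2; rewrite addrC. Qed.

Lemma M2diag_sandwich a d (Y : T) : M2diag a d * Y * M2diag a d =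
  mkM2 (a * m11 Y * a) (a * m12 Y * d) (d * m21 Y * a) (d * m22 Y * d).
Proof. by case: Y => y1 y2 y3 y4; rewrite /M2diag; M2_simpl. Qed.

Lemma M2_idem_entry11 e f g h : (mkM2 e f g h : T) * mkM2 e f g h = mkM2 e f g h ->
  s ^+ 2 * f * g = e - e * e.
Proof. by rewrite mulM2E => -[ee _ _ _]; apply: (addIr (e * e)); rewrite subrK addrC. Qed.

Hypothesis R_local : local_ring R.

(* k := h - s^2 g e^-1 f is an idempotent of R with k g = 0 = f k; locality
   gives k = 0 or k = 1, and k = 1 would force the matrix to be 1. *)
Lemma M2_idem_schur e f g h : e \is a GRing.unit ->
  (mkM2 e f g h : T) * mkM2 e f g h = mkM2 e f g h -> mkM2 e f g h <> 1 :> T ->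
  h = s ^+ 2 * g * e^-1 * f.
Proof.
move=> eU FF F1; have := M2_idem_entry11 FF; move: FF; rewrite mulM2E => -[_ fh ge hh].
move: (s2_central s_central) hh; move: (s ^+ 2) => t tC hh tfg.
pose k := h - t * g * e^-1 * f.
have kg : k * g = 0.
  have -> : k * g = h * g - g * e^-1 * (t * f * g).
    by rewrite /k mulrBl (mulrA _ (t * f)) (mulrA _ t) tC !mulrA.
  rewrite tfg mulrBr -!mulrA mulVr // mulr1 mulKr //.
  have -> : g - g * e = h * g by rewrite -{1}ge addrAC subrr add0r.
  exact: subrr.
have kh : k * h = k.
  have f1h : f * (1 - h) = e * f by rewrite mulrBr mulr1 -{1}fh addrK.
  have h1h : h * (1 - h) = t * g * f by rewrite mulrBr mulr1 -{1}hh addrK.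
  have : k * (1 - h) = 0 by rewrite /k mulrBl h1h -!mulrA f1h mulKr // subrr.
  by rewrite mulrBr mulr1 => /eqP; rewrite subr_eq0 => /eqP.
have fk : f * k = 0.
  have -> : f * k = f * h - t * f * g * e^-1 * f.
    by rewrite /k mulrBr !mulrA tC.
  rewrite tfg mulrBl mulrV // mulrK // mulrBl mul1r.
  have -> : f - e * f = f * h by rewrite -{1}fh addrAC subrr add0r.
  exact: subrr.
have kk : k * k = k.
  by rewrite {2}/k mulrBr kh !mulrA tC -(mulrA t k) kg mulr0 !mul0r subr0.
have [k0 | k1] := local_idem R_local kk.
  by apply/eqP; rewrite -subr_eq0; apply/eqP.
have g0 : g = 0 by rewrite -[g]mul1r -k1 kg.
have f0 : f = 0 by rewrite -[f]mulr1 -k1 fk.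
have e1 : e = 1.
  apply: (mulrI eU); move/esym/eqP: tfg.
  by rewrite f0 mulr0 mul0r subr_eq0 mulr1 => /eqP <-.
have h1 : h = 1 by rewrite -k1 /k f0 mulr0 subr0.
by case: F1; rewrite oneM2E e1 f0 g0 h1.
Qed.

Lemma M2_idem_unit_corner e f g h : e \is a GRing.unit ->
  (mkM2 e f g h : T) * mkM2 e f g h = mkM2 e f g h -> mkM2 e f g h <> 1 :> T ->
  exists u v : T, u * v = mkM2 e f g h /\ v * u = M2diag 1 0.
Proof.
move=> eU FF F1; exists (mkM2 e 0 g 0), (mkM2 1 (e^-1 * f) 0 0); split; M2_simpl.
  by rewrite mulVKr // (M2_idem_schur eU FF F1) !mulrA.
move: (s2_central s_central) (M2_idem_entry11 FF); move: (s ^+ 2) => t tC tfg.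
rewrite mulrA -tC -!mulrA (mulrA t f g) tfg mulrBr mulVr // mulKr //.
by rewrite addrC subrK.
Qed.

Lemma M2_idem_diag_unit (F : T) : F * F = F -> F <> 0 ->
  m11 F \is a GRing.unit \/ m22 F \is a GRing.unit.
Proof.
case: F => e f g h FF F0 /=.
have [eU | /(local_nonunit_inJ R_local) Je] := boolP (e \is a GRing.unit); first by left.
have [hU | /(local_nonunit_inJ R_local) Jh] := boolP (h \is a GRing.unit); first by right.
have Jf : inJ f.
  apply: (local_nonunit_inJ R_local); apply/negP => fU; apply: R_local.1.
  move: FF; rewrite mulM2E => -[_ fh _ _].
  have <- : f^-1 * e * f + h = 1 by rewrite -mulrA -(mulKr fU h) -mulrDr fh mulVr.
  by apply: inJ_add => //; apply/inJ_mulr/inJ_mull.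
have : invertible (1 - (mkM2 e f g h : T)).
  rewrite oneM2E oppM2E addM2E; apply: invertible_mkM2.
  - by rewrite -[_ + _]/(1 - e); apply: unitrB_inJ; rewrite ?unitr1.
  - by rewrite -[_ + _]/(1 - h); apply: unitrB_inJ; rewrite ?unitr1.
  - by rewrite (sub0r f) -(mulN1r f) mulrA; apply: inJ_mull.
move/(idem_invertible_eq1 (idem_subr FF)) => /eqP; rewrite subr_eq addrC -subr_eq subrr.
by move/eqP/esym.
Qed.

Lemma M2_idem_corner (F : T) : F * F = F -> F <> 0 -> F <> 1 ->
  exists u v : T, u * v = F /\ (v * u = M2diag 1 0 \/ v * u = M2diag 0 1).
Proof.
case: F => e f g h FF F0 F1; case: (M2_idem_diag_unit FF F0) => /= U.
  by have [u [v [uv vu]]] := M2_idem_unit_corner U FF F1; exists u, v; split; [|left].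
have [||u [v [uv vu]]] := M2_idem_unit_corner (f := g) (g := f) (h := e) U.
- by rewrite -[mkM2 h g f e]/(M2swap (mkM2 e f g h)) -M2swapM FF.
- by rewrite oneM2E => -[h1 g0 f0 e1]; apply: F1; rewrite oneM2E e1 f0 g0 h1.
exists (M2swap u), (M2swap v); split; last by right; rewrite -M2swapM vu.
by rewrite -M2swapM uv.
Qed.

Lemma M2_corner_diag (F X : T) : F * F = F -> F <> 0 -> F <> 1 ->
  F * X = X -> X * F = X ->
  exists a d (u v : T), forall n,
    M2diag a d ^+ n.+1 = v * X ^+ n.+1 * u /\ X ^+ n.+1 = u * M2diag a d ^+ n.+1 * v.
Proof.
move=> FF F0 F1 FX XF; have [u [v [uv vu]]] := M2_idem_corner FF F0 F1.
have Xuv : X * (u * v) = X by rewrite uv.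
have Y_left : v * u * (v * X * u) = v * X * u.
  by rewrite !mulrA -(mulrA v u v) uv -(mulrA v F X) FX.
have Y_right : v * X * u * (v * u) = v * X * u.
  by rewrite mulrA -(mulrA (v * X) u v) uv -(mulrA v X F) XF.
have [a [d Yd]] : exists a d, v * X * u = M2diag a d.
  rewrite -Y_left -Y_right mulrA; case: vu => ->; rewrite M2diag_sandwich; M2_simpl.
    by exists (m11 (v * X * u)), 0.
  by exists 0, (m22 (v * X * u)).
exists a, d, u, v => n; split; first by rewrite -Yd; exact: conj_expr.
have -> : X = u * M2diag a d * v.
  by rewrite -Yd !mulrA uv FX -(mulrA X u v) uv XF.
by rewrite conj_expr // -Yd.
Qed.

Lemma M2_corner_nilpotent_jacobson (F X : T) n : F * F = F -> F <> 0 -> F <> 1 ->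
  F * X = X -> X * F = X -> X ^+ n = 0 -> in_jacobson X.
Proof.
move=> FF F0 F1 FX XF Xn; have [a [d [u [v conj]]]] := M2_corner_diag FF F0 F1 FX XF.
have [+ _] := conj n; rewrite [X ^+ _]exprSr Xn mul0r mulr0 mul0r M2diagX zeroM2E.
case=> /(local_nilpotent_inJ R_local) Ja /(local_nilpotent_inJ R_local) Jd.
have [_] := conj 0%N; rewrite !expr1 => ->.
by apply/in_jacobson_mulr/in_jacobson_mull/M2diag_jacobson.
Qed.

Lemma M2_corner_jacobson_nilpotent (F X : T) : J_nil R -> F * F = F -> F <> 0 -> F <> 1 ->
  F * X = X -> X * F = X -> in_jacobson X -> exists n, X ^+ n = 0.
Proof.
move=> Jnil FF F0 F1 FX XF JX; have [a [d [u [v conj]]]] := M2_corner_diag FF F0 F1 FX XF.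
have [+ _] := conj 0%N; rewrite !expr1 => Yd.
have /M2diag_jacobson [/Jnil [na an] /Jnil [nd dn]] : in_jacobson (M2diag a d).
  by rewrite Yd; apply/in_jacobson_mulr/in_jacobson_mull.
have ak : a ^+ (na + nd).+1 = 0 by rewrite -addnS exprD an mul0r.
have dk : d ^+ (na + nd).+1 = 0 by rewrite addnC -addnS exprD dn mul0r.
by exists (na + nd).+1; have [_ ->] := conj (na + nd)%N; rewrite M2diagX ak dk mulr0 mul0r.
Qed.

Lemma M2_idem_commute_nilpotent_jacobson (E W : T) n : E * E = E -> E <> 0 -> E <> 1 ->
  E * W = W * E -> W ^+ n = 0 -> in_jacobson W.
Proof.
move=> EE E0 E1 EW Wn.
have corner F : F * F = F -> F <> 0 -> F <> 1 -> F * W = W * F -> in_jacobson (F * W).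
  move=> FF F0 F1 FW; apply: (M2_corner_nilpotent_jacobson (n := n.+1) FF F0 F1).
  - by rewrite mulrA FF.
  - by rewrite -mulrA -FW mulrA FF.
  - by rewrite idem_mul_expr // exprSr Wn mul0r mulr0.
have [F0 F1] := idem_complement_nontrivial E0 E1.
rewrite -[W]mul1r -[1](subrK E) mulrDl.
by apply: in_jacobson_add; apply: corner => //; [apply: idem_subr | apply: commr_1sub].
Qed.

Lemma M2_idem_commute_jacobson_nilpotent (E W : T) : J_nil R ->
  E * E = E -> E <> 0 -> E <> 1 -> E * W = W * E -> in_jacobson W ->
  exists n, W ^+ n = 0.
Proof.
move=> Jnil EE E0 E1 EW JW.
have corner F : F * F = F -> F <> 0 -> F <> 1 -> F * W = W * F ->
    exists n, (F * W) ^+ n = 0.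
  move=> FF F0 F1 FW; apply: (M2_corner_jacobson_nilpotent Jnil FF F0 F1).
  - by rewrite mulrA FF.
  - by rewrite -mulrA -FW mulrA FF.
  - exact: in_jacobson_mull.
have [F0 F1] := idem_complement_nontrivial E0 E1.
apply: (nilpotent_idem_split EE EW); apply: corner => //.
  exact: idem_subr.
exact: commr_1sub.
Qed.

Lemma M2_strongly_nil_clean_J_nil :
  (forall A : M2s R, ~ M2unit s A -> ~ M2unit s (M2sub (M2one R) A) ->
     strongly_nil_clean s A) -> J_nil R.
Proof.
move=> snc x Jx; have x1U : (1 - x) \is a GRing.unit by have := Jx 1; rewrite mul1r.
pose A : T := M2diag x 1.
have AN : ~ invertible A by case/M2diag_invertible => xU _; case/negP: (inJ_nonunit Jx).
have A1N : ~ invertible (1 - A).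
  have -> : 1 - A = M2diag (1 - x) 0 by rewrite /A /M2diag; M2_simpl.
  by case/M2diag_invertible => _; rewrite unitr0.
have /strongly_nil_cleanE [[e f g h] [EE AE [n AEn]]] := snc A AN A1N.
move: AE; rewrite /A /M2diag; M2_simpl => -[_ xf gx].
have f0 : f = 0 by apply: (mulrI x1U); rewrite mulrBl mul1r xf subrr mulr0.
have g0 : g = 0 by apply: (mulIr x1U); rewrite mulrBr mulr1 -gx subrr mul0r.
move: EE AEn; rewrite f0 g0 -[mkM2 e 0 0 h]/(M2diag e h) M2diagM => -[ee _].
have -> : A - M2diag e h = M2diag (x - e) (1 - h) by rewrite /A /M2diag; M2_simpl.
rewrite M2diagX zeroM2E => -[xen _].
have [e0 | e1] := local_idem R_local ee; first by exists n; rewrite -xen e0 subr0.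
by move: xen; rewrite e1 => /nilpotent_nonunit; rewrite -opprB unitrN x1U.
Qed.

Lemma M2_strongly_nil_clean_J_clean (A : T) :
  ~ M2unit s A -> ~ M2unit s (M2sub (M2one R) A) ->
  strongly_nil_clean s A -> strongly_J_clean s A.
Proof.
move=> AN A1N /strongly_nil_cleanE [E [EE AE [n AEn]]].
apply/strongly_J_cleanE; exists E; split=> //.
have [E0 E1] := clean_idem_nontrivial (AN : ~ invertible A) (A1N : ~ invertible (1 - A))
  (invertible_1sub_nilpotent AEn) (invertible_1add_nilpotent AEn).
by apply: (M2_idem_commute_nilpotent_jacobson EE E0 E1 _ AEn); rewrite mulrBl mulrBr AE.
Qed.

Lemma M2_strongly_J_clean_nil_clean (A : T) : J_nil R ->
  ~ M2unit s A -> ~ M2unit s (M2sub (M2one R) A) ->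
  strongly_J_clean s A -> strongly_nil_clean s A.
Proof.
move=> Jnil AN A1N /strongly_J_cleanE [E [EE AE JAE]].
apply/strongly_nil_cleanE; exists E; split=> //.
have [E0 E1] := clean_idem_nontrivial (AN : ~ invertible A) (A1N : ~ invertible (1 - A))
  (in_jacobson_1sub JAE) (in_jacobson_1add JAE).
by apply: (M2_idem_commute_jacobson_nilpotent Jnil EE E0 E1 _ JAE); rewrite mulrBl mulrBr AE.
Qed.
End M2Local.

Theorem proposition2p14 (R : unitRingType) (s : R) :
  local_ring R -> central s ->
  ((forall A : M2s R, ~ M2unit s A -> ~ M2unit s (M2sub (M2one R) A) ->
        strongly_nil_clean s A)
   <->
   ((forall A : M2s R, ~ M2unit s A -> ~ M2unit s (M2sub (M2one R) A) ->
        strongly_J_clean s A)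
    /\ J_nil R)).
Proof.
move=> R_local s_central; split=> [snc | [sjc Jnil] A AN A1N].
  split; last exact: M2_strongly_nil_clean_J_nil.
  by move=> A AN A1N; apply: M2_strongly_nil_clean_J_clean => //; apply: snc.
by apply: (M2_strongly_J_clean_nil_clean (s_central := s_central)) => //; apply: sjc.
Qed.
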